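(* Let $2\le m\le n$. Then $\operatorname{diam}(Y^0_{n,m})=\operatorname{diam}(Y^1_{n,m})=\lfloor n(m+1)/2\rfloor$.
   Context: The Yoke graph $Y_{n,m}$ has vertices the tuples $v=(v_0,\dots,v_{m+1})$ with $v_0,v_{m+1}\in\mathbb{Z}_n$, $v_1,\dots,v_m\in\{0,1\}$, $\sum v_i\equiv0\pmod n$; $u\sim v$ iff there is $0\le i\le m$ with $u_j=v_j$ for $j\notin\{i,i+1\}$ and either ($u_i=v_i+1$, $u_{i+1}=v_{i+1}-1$) or ($u_i=v_i-1$, $u_{i+1}=v_{i+1}+1$), buckets mod $n$. A vertex is identified with $(v_0,\dots,v_m)\in\{0,\dots,n-1\}\times\{0,1\}^m$ (with $v_0$ its least non-negative representative). Equip this set with the dominance order: $(v_0,\dots,v_m)\trianglelefteq(u_0,\dots,u_m)$ iff $\sum_{j=0}^{i}v_j\le\sum_{j=0}^{i}u_j$ for all $0\le i\le m$. Let $\hat0=(0,\dots,0)$, $\hat1=(n-1,1,\dots,1)$, $u_0=(n-1,1,0,\dots,0)$, $u_1=(0,0,1,\dots,1)$; let $I_0=[\hat0,u_0]$ and $I_1=[u_1,\hat1]$ be intervals in this order, and let $Y^0_{n,m}$, $Y^1_{n,m}$ be the subgraphs of $Y_{n,m}$ induced by $I_0$ and $I_1$ respectively (distances measured within these subgraphs). *)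

From HB Require Import structures.
From mathcomp Require Import all_boot all_order all_algebra.
Set Implicit Arguments. Unset Strict Implicit. Unset Printing Implicit Defensive.
Import Order.TTheory GRing.Theory Num.Theory.
Local Open Scope ring_scope.

(* A vertex of the Yoke graph Y_{n,m} is identified with
   (v_0, v_1, ..., v_m) in {0..n-1} x {0,1}^m; the last bucket v_{m+1}
   is determined by v_0 + ... + v_{m+1} = 0 (mod n). *)
Definition yvert (n m : nat) := ('I_n * m.-tuple bool)%type.

Section Yoke.
Variables n m : nat.

Definition ylast (v : yvert n m) : nat :=
  ((n - ((v.1 : nat) + count id v.2) %% n) %% n)%N.

Definition yent (v : yvert n m) (j : nat) : int :=
  if j == 0%N then (v.1 : nat)%:Z
  else if (j <= m)%N then (nth false v.2 j.-1 : nat)%:Z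
  else (ylast v)%:Z.

Definition yeqat (j : nat) (x y d : int) : bool :=
  if (j == 0%N) || (j == m.+1) then (n%:Z %| x - (y + d))%Z
  else x == y + d.

Definition yadj (u v : yvert n m) : bool :=
  [exists i : 'I_m.+1,
     [forall j : 'I_m.+2, ((j : nat) != i) && ((j : nat) != i.+1) ==>
        (yent u j == yent v j)] &&
     ((yeqat i (yent u i) (yent v i) 1 &&
       yeqat i.+1 (yent u i.+1) (yent v i.+1) (-1)) ||
      (yeqat i (yent u i) (yent v i) (-1) &&
       yeqat i.+1 (yent u i.+1) (yent v i.+1) 1))].

Definition ycoords (v : yvert n m) : seq int := [seq yent v j | j <- iota 0 m.+1].

Definition psum (s : seq int) (i : nat) : int := \sum_(j < i.+1) nth 0 s j.
Definition dom (s t : seq int) : bool :=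
  all (fun i => psum s i <= psum t i) (iota 0 m.+1).

Definition yhat0 : seq int := nseq m.+1 0.
Definition yhat1 : seq int := (n.-1)%:Z :: nseq m 1.
Definition yu0 : seq int := (n.-1)%:Z :: 1 :: nseq m.-1 0.
Definition yu1 : seq int := 0 :: 0 :: nseq m.-1 1.

Definition yI0 : pred (yvert n m) :=
  fun v => dom yhat0 (ycoords v) && dom (ycoords v) yu0.
Definition yI1 : pred (yvert n m) :=
  fun v => dom yu1 (ycoords v) && dom (ycoords v) yhat1.

Definition walk_in (S : pred (yvert n m)) (x y : yvert n m) (k : nat) : Prop :=
  exists p : seq (yvert n m),
    [/\ size p = k, path yadj x p, last x p = y & all S (x :: p)].

(* diam of the induced subgraph on S equals D: every pair of vertices of S
   is at distance <= D within S (so the subgraph is connected), and some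
   pair is at distance >= D (no walk within S of length < D). *)
Definition induced_diam_eq (S : pred (yvert n m)) (D : nat) : Prop :=
  (forall x y, S x -> S y -> exists2 k, (k <= D)%N & walk_in S x y k) /\
  (exists x y, [/\ S x, S y & forall k, walk_in S x y k -> (D <= k)%N]).

End Yoke.

From mathcomp Require Import all_boot all_algebra zify.
Import GRing.Theory.
Set Implicit Arguments. Unset Strict Implicit. Unset Printing Implicit Defensive.

(* Encode a vertex v by its partial sums F_v(t) = v_0 + ... + v_t, 0 <= t <= m: a staircase
   with F_v(0) < n rising by 0 or 1 at each step. A move of Y_{n,m} changes one partial sum
   by one, except that a move through the bucket v_0 may wrap around modulo n, which shifts
   a whole staircase by (n-1, n, ..., n). The interval I_0 becomes the set of staircases
   bounded by n, and so does I_1 after the reflection F(t) |-> n-1+t-F(t); inside either,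
   the only wrapping edge joins the bottom staircase 0 to the top one. Hence two vertices at
   l1 distance L are at distance at most L, and at most n(m+1) - L (going around through
   the wrapping edge) when one staircase lies above the other; crossing staircases have
   L <= m(m+1)/2 <= n(m+1)/2. Conversely, the area under the staircase changes by one along
   every edge except the wrapping one, which joins areas 0 and n(m+1)-1, so a staircase of
   area n(m+1)/2 is that far from 0. *)

Section Staircases.
Variables n m : nat.

Definition eqon (f g : nat -> nat) := forall t, t <= m -> f t = g t.

Definition staircase (g : nat -> nat) :=
  g 0 < n /\ forall t, t < m -> g t.+1 = g t \/ g t.+1 = (g t).+1.

Definition capped (g : nat -> nat) := forall t, t <= m -> g t <= n.

Definition top_stair t := if t == 0 then n.-1 else n.

Definition one_apart (f g : nat -> nat) := exists2 t, t <= m &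
  (f t = (g t).+1 \/ g t = (f t).+1) /\ forall s, s <= m -> s != t -> f s = g s.

Definition wraps (f g : nat -> nat) := forall t, t <= m -> f t = g t + top_stair t.

Definition area (f : nat -> nat) := \sum_(t < m.+1) f t.

Definition l1dist (f g : nat -> nat) := \sum_(t < m.+1) (f t - g t + (g t - f t)).

Definition lower_at (f : nat -> nat) t0 s := if s == t0 then (f s).-1 else f s.

Lemma sum_one_more F G t0 : t0 <= m -> F t0 = (G t0).+1 ->
  (forall t, t <= m -> t != t0 -> F t = G t) ->
  \sum_(t < m.+1) F t = (\sum_(t < m.+1) G t).+1.
Proof.
move=> t0m Ft0 FG; pose i0 : 'I_m.+1 := Ordinal (t0m : t0 < m.+1).
rewrite (bigD1 i0) // [in RHS](bigD1 i0) //= Ft0 addSn; congr (_ + _).+1.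
apply: eq_bigr => i i_ne; apply: FG; first by rewrite -ltnS.
by apply: contraNneq i_ne => ei; apply/eqP/val_inj.
Qed.

Lemma area_eqon f g : eqon f g -> area f = area g.
Proof. by move=> fg; apply: eq_bigr => t _; rewrite fg // -ltnS. Qed.

Lemma l1dist_eqon f f' g g' : eqon f f' -> eqon g g' -> l1dist f g = l1dist f' g'.
Proof. by move=> ff' gg'; apply: eq_bigr => t _; rewrite ff' ?gg' // -ltnS. Qed.

Lemma l1distC f g : l1dist f g = l1dist g f.
Proof. by apply: eq_bigr => t _; rewrite addnC. Qed.

Lemma l1dist_eq0 f g : l1dist f g = 0 -> eqon f g.
Proof.
move=> /eqP; rewrite sum_nat_eq0 => /forallP fg t tm.
by have := fg (Ordinal (tm : t < m.+1)); rewrite /=; lia.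
Qed.

Lemma l1dist_le_area f g : (forall t, t <= m -> g t <= f t) ->
  l1dist f g + area g = area f.
Proof.
move=> gf; rewrite -big_split; apply: eq_bigr => t _ /=.
by have := gf t (ltn_ord t); lia.
Qed.

Lemma one_apart_eqon f f' g g' : eqon f f' -> eqon g g' -> one_apart f g -> one_apart f' g'.
Proof.
move=> ff' gg' [t tm [ft fg]]; exists t => //; rewrite -ff' // -gg' //; split=> //.
by move=> s sm st; rewrite -ff' // -gg' // fg.
Qed.

Lemma one_apart_area f g : one_apart f g ->
  area f = (area g).+1 \/ area g = (area f).+1.
Proof.
case=> t tm [[ft | gt] fg]; [left | right]; apply: (sum_one_more tm) => //.
by move=> s sm st; rewrite fg.
Qed.

Lemma staircase_le g : staircase g -> forall t, t <= m -> g t <= n.-1 + t.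
Proof.
case=> g0 gS; elim=> [|t IH] tm; first by lia.
by have := IH (ltnW tm); case: (gS t tm); lia.
Qed.

Lemma staircase0 : 0 < n -> staircase (fun=> 0).
Proof. by split=> // t _; left. Qed.

Lemma staircase_top : 0 < n -> staircase top_stair.
Proof. by move=> n_gt0; split=> [|[|t] _]; rewrite /top_stair /=; lia. Qed.

Lemma capped0 : capped (fun=> 0).
Proof. by []. Qed.

Lemma capped_top : capped top_stair.
Proof. by move=> t _; rewrite /top_stair; case: eqP; lia. Qed.

Lemma area_top : area top_stair = (n * m.+1).-1.
Proof.
rewrite /area big_ord_recl /top_stair /=.
by rewrite (eq_bigr (fun=> n)) // sum_nat_const card_ord mulnS; nia.
Qed.

Lemma area0 : area (fun=> 0) = 0.
Proof. by rewrite /area big1. Qed.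

Lemma l1dist0l f : l1dist (fun=> 0) f = area f.
Proof. by rewrite l1distC -[RHS](@l1dist_le_area f (fun=> 0)) // area0 addn0. Qed.

Lemma le_top_stair f : staircase f -> capped f -> forall t, t <= m -> f t <= top_stair t.
Proof. by move=> [f0 _] fc [|t] tm; rewrite /top_stair /=; [lia | apply: fc]. Qed.

Lemma wraps_capped f g : staircase f -> capped f -> wraps f g ->
  eqon f top_stair /\ eqon g (fun=> 0).
Proof.
move=> [f0 _] fc fg; suff g0 : eqon g (fun=> 0) by split=> // t tm; rewrite fg ?g0.
move=> [|t] tm; have := fg _ tm; rewrite /top_stair /=; first by lia.
by have := fc _ tm; lia.
Qed.

(* Go right from t while f keeps rising (g stays below f), then left while f is flat. *)
Lemma lowerable_point f g : staircase f -> staircase g ->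
  (exists2 t, t <= m & g t < f t) ->
  exists t0, [/\ t0 <= m, g t0 < f t0, (0 < t0 -> f t0.-1 < f t0) & (t0 < m -> f t0.+1 = f t0)].
Proof.
move=> [_ fS] [_ gS] [t tm gf].
have [t1 [/andP [_ t1m] gf1 f1S]] :
    exists t1, [/\ t <= t1 <= m, g t1 < f t1 & (t1 < m -> f t1.+1 = f t1)].
  move: (m - t) (subnKC tm) gf => k; elim: k t {tm} => [|k IH] t tk gft.
    by exists t; split=> //; lia.
  have tm : t < m by lia.
  case: (fS t tm) => ft; first by exists t; split=> //; lia.
  have gf' : g t.+1 < f t.+1 by case: (gS t tm); lia.
  have [|t1 [? ? ?]] := IH t.+1 _ gf'; first by lia.
  by exists t1; split=> //; lia.
elim: t1 t1m gf1 f1S {t tm gf} => [|t IH] tm gf fS'; first by exists 0; split.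
case: (fS t tm) => ft; last by exists t.+1; split=> // _; rewrite ft.
by apply: IH; [lia | case: (gS t tm); lia | lia].
Qed.

Lemma lower_at_step f g : staircase f -> staircase g -> capped f ->
  (exists2 t, t <= m & g t < f t) ->
  exists t0, [/\ staircase (lower_at f t0), capped (lower_at f t0),
    one_apart f (lower_at f t0) & l1dist (lower_at f t0) g + 1 = l1dist f g].
Proof.
move=> sf sg fc /(lowerable_point sf sg) [t0 [t0m gf f_prev f_next]].
case: sf => f0 fS; exists t0; split.
- split=> [|t tm]; rewrite /lower_at; first by case: eqP; lia.
  case: (eqVneq t t0) => [tt0|_].
    by subst t0; rewrite gtn_eqF //; have := f_next tm; lia.
  case: (eqVneq t.+1 t0) => [tt0|_]; last exact: fS.
  by subst t0; have := f_prev isT; have := fS t tm; rewrite /=; lia.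
- by move=> t tm; rewrite /lower_at; have := fc t tm; case: eqP; lia.
- exists t0 => //; rewrite /lower_at eqxx; split; first by lia.
  by move=> s _ /negbTE ->.
- rewrite addn1 /l1dist; symmetry.
  pose dist h s := h s - g s + (g s - h s).
  apply: (@sum_one_more (dist f) (dist (lower_at f t0)) t0 t0m); rewrite /dist.
    by rewrite /lower_at eqxx; lia.
  by move=> s _ /negbTE; rewrite /lower_at => ->.
Qed.

Lemma staircase_gap_le f g z : staircase f -> staircase g -> z <= m -> f z = g z ->
  forall t, t <= m -> f t - g t + (g t - f t) <= (t - z) + (z - t).
Proof.
move=> [_ fS] [_ gS] zm fgz.
have up k : z + k <= m -> f (z + k) - g (z + k) + (g (z + k) - f (z + k)) <= k.
  elim: k => [|k IH] zk; first by rewrite addn0; lia.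
  have zkm : z + k < m by lia.
  by have := IH (ltnW zkm); rewrite addnS; case: (fS _ zkm); case: (gS _ zkm); lia.
have down k : k <= z -> f (z - k) - g (z - k) + (g (z - k) - f (z - k)) <= k.
  elim: k => [|k IH] kz; first by rewrite subn0; lia.
  have zkm : z - k.+1 < m by lia.
  have zkS : (z - k.+1).+1 = z - k by lia.
  by have := IH (ltnW kz); move: (fS _ zkm) (gS _ zkm); rewrite zkS; lia.
move=> t tm; case: (leqP z t) => zt.
  by have := up (t - z); rewrite subnKC //; lia.
by have := down (z - t); rewrite subKn; lia.
Qed.

Lemma l1dist_meet f g z : staircase f -> staircase g -> z <= m -> f z = g z ->
  2 * l1dist f g <= m * m.+1.
Proof.
move=> sf sg zm fgz.
have gap := staircase_gap_le sf sg zm fgz.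
rewrite mul2n -addnn {2}/l1dist (reindex_inj rev_ord_inj) -big_split /=.
have -> : m * m.+1 = \sum_(t < m.+1) m by rewrite sum_nat_const card_ord mulnC.
apply: leq_sum => t _.
have := gap t (ltn_ord t); have := gap (m - t) (leq_subr t m).
by have := ltn_ord t; rewrite subSS; lia.
Qed.

Lemma staircase_apart_lt f g : staircase f -> staircase g ->
  (forall t, t <= m -> f t != g t) -> g 0 < f 0 -> forall t, t <= m -> g t < f t.
Proof.
move=> [_ fS] [_ gS] fg gf0; elim=> [|t IH] tm //.
by have := IH (ltnW tm); have := fg _ tm; case: (fS t tm); case: (gS t tm); lia.
Qed.

(* The witness is q + [m+1-r <= t], where a = q(m+1) + r. *)
Lemma staircase_of_area a : a < n * m.+1 ->
  exists g, [/\ staircase g, capped g & area g = a].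
Proof.
move=> a_lt; have q_lt : a %/ m.+1 < n by rewrite ltn_divLR.
have r_lt := ltn_pmod a (ltn0Sn m).
exists (fun t => a %/ m.+1 + (m.+1 - a %% m.+1 <= t)); split.
- split=> [|t _]; first by lia.
  by case: (leqP (m.+1 - a %% m.+1) t); case: (leqP (m.+1 - a %% m.+1) t.+1); lia.
- by move=> t _; case: (_ <= t); lia.
have count_le k c : \sum_(t < k) (c <= t) = k - c.
  by elim: k => [|k IH]; rewrite ?big_ord0 // big_ord_recr /= IH; case: (leqP c k); lia.
rewrite /area big_split /= sum_nat_const card_ord count_le.
by have := divn_eq a m.+1; lia.
Qed.

Definition flip_stair (g : nat -> nat) t := n.-1 + t - g t.

Lemma staircase_flip g : staircase g -> staircase (flip_stair g).
Proof.
move=> sg; have g_le := staircase_le sg; case: sg => g0 gS.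
split=> [|t tm]; rewrite /flip_stair; first by lia.
by have := g_le t (ltnW tm); have := g_le t.+1 tm; case: (gS t tm); lia.
Qed.

Lemma one_apart_flip f g : staircase f -> staircase g ->
  one_apart (flip_stair f) (flip_stair g) <-> one_apart f g.
Proof.
move=> /staircase_le f_le /staircase_le g_le.
split=> -[t tm [ft fg]]; exists t => //; move: ft fg; rewrite /flip_stair => ft fg.
  split; first by have := f_le t tm; have := g_le t tm; lia.
  by move=> s sm st; have := fg s sm st; have := f_le s sm; have := g_le s sm; lia.
by split=> [|s sm st]; [have := f_le t tm; have := g_le t tm; lia | rewrite fg].
Qed.

Lemma wraps_flip f g : staircase f -> staircase g ->
  wraps (flip_stair f) (flip_stair g) <-> wraps g f.
Proof.
move=> /staircase_le f_le /staircase_le g_le.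
split=> fg t tm; have := fg t tm; have := f_le t tm; have := g_le t tm; rewrite /flip_stair; lia.
Qed.

End Staircases.

Section Walks.
Variables n m : nat.

Lemma yeqatC j (x y d : int) : yeqat n m j x y d = yeqat n m j y x (- d)%R.
Proof.
rewrite /yeqat; case: ifP => _; last by apply/eqP/eqP; lia.
by apply/dvdzP/dvdzP => -[q xy]; exists (- q)%R; rewrite mulNr -xy; lia.
Qed.

Lemma yadjC (u v : yvert n m) : yadj u v -> yadj v u.
Proof.
case/existsP=> i /andP [/forallP same shift]; apply/existsP; exists i; apply/andP; split.
  by apply/forallP => j; apply/implyP => ji; rewrite eq_sym (implyP (same j) ji).
by rewrite !(yeqatC i (yent v i)) !(yeqatC i.+1 (yent v i.+1)) !opprK orbC.
Qed.

Variable S : pred (yvert n m).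

Lemma walk_nil x : S x -> walk_in S x x 0.
Proof. by move=> Sx; exists [::]; rewrite /= Sx. Qed.

Lemma walk_cons x y z k : S x -> yadj x y -> walk_in S y z k -> walk_in S x z k.+1.
Proof. by move=> Sx xy [p [<- yp <- Sp]]; exists (y :: p); rewrite /= Sx xy. Qed.

Lemma walk_cat x y z k l : walk_in S x y k -> walk_in S y z l -> walk_in S x z (k + l).
Proof.
move=> [p [<- xp <- Sp]] [q [<- yq <- Sq]]; exists (p ++ q).
rewrite size_cat cat_path last_cat xp yq -cat_cons all_cat Sp.
by case/andP: Sq.
Qed.

Lemma walk_last_step x z k : walk_in S x z k.+1 ->
  exists y, [/\ walk_in S x y k, S y, yadj y z & S z].
Proof.
case=> p [size_p xp px Sp]; case/lastP: p size_p xp px Sp => [//|p y].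
rewrite size_rcons rcons_path last_rcons -rcons_cons all_rcons.
move=> -[<-] /andP [xp yz] <- /andP [Sz Sp].
exists (last x p); split=> //; first by exists p.
by apply: (allP Sp); rewrite mem_last.
Qed.

Lemma walk_rev x y k : walk_in S x y k -> walk_in S y x k.
Proof.
elim: k x y => [|k IH] x y.
  by case=> p [/size0nil -> _ /= <- /andP [Sx _]]; apply: walk_nil.
by case/walk_last_step=> z [xz _ zy Sy]; apply: walk_cons Sy (yadjC zy) (IH _ _ xz).
Qed.

End Walks.

Section Encoding.
Variables n m : nat.

Record encoding (phi : yvert n m -> nat -> nat) : Prop := Encoding {
  encoding_staircase v : staircase n m (phi v);
  encoding_onto g : staircase n m g -> exists v, eqon m (phi v) g;
  encoding_inj u v : eqon m (phi u) (phi v) -> u = v;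
  encoding_adj u v : yadj u v <->
    [\/ one_apart m (phi u) (phi v), wraps n m (phi u) (phi v) | wraps n m (phi v) (phi u)] }.

Lemma encoding_flip phi : encoding phi -> encoding (fun v => flip_stair n (phi v)).
Proof.
case=> stair onto inj adjE; split=> [v|g sg|u v uv|u v].
- exact: staircase_flip.
- have [v v_g] := onto _ (staircase_flip sg); exists v => t tm.
  by rewrite /flip_stair v_g // /flip_stair; have := staircase_le sg tm; lia.
- apply: inj => t tm; have := uv t tm; rewrite /flip_stair.
  by have := staircase_le (stair u) tm; have := staircase_le (stair v) tm; lia.
- have uv := one_apart_flip (stair u) (stair v).
  have wuv := wraps_flip (stair u) (stair v); have wvu := wraps_flip (stair v) (stair u).
  rewrite adjE; split=> -[h|h|h];
    [apply: Or31 | apply: Or33 | apply: Or32 | apply: Or31 | apply: Or33 | apply: Or32]; tauto.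
Qed.

End Encoding.

Section Diameter.
Variables n m : nat.
Hypotheses (n_gt0 : 0 < n) (m_le_n : m <= n).
Variables (phi : yvert n m -> nat -> nat) (I : pred (yvert n m)).
Hypothesis phiE : encoding phi.
Hypothesis I_capped : forall v, I v <-> capped n m (phi v).

Local Notation N := (n * m.+1).

Let stair v := encoding_staircase phiE v.

Lemma vertex_of g : staircase n m g -> capped n m g -> exists2 v, I v & eqon m (phi v) g.
Proof.
move=> sg cg; have [v v_g] := encoding_onto phiE sg.
by exists v => //; apply/I_capped => t tm; rewrite v_g // cg.
Qed.

Lemma bottom_top_adj z w : eqon m (phi z) (fun=> 0) -> eqon m (phi w) (top_stair n) ->
  yadj w z.
Proof. by move=> z0 wtop; apply/(encoding_adj phiE)/Or32 => t tm; rewrite z0 ?wtop. Qed.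

Lemma area_adj u v : I u -> I v -> yadj u v ->
  [\/ area m (phi u) = (area m (phi v)).+1, area m (phi v) = (area m (phi u)).+1,
      area m (phi u) = N.-1 /\ area m (phi v) = 0
    | area m (phi u) = 0 /\ area m (phi v) = N.-1].
Proof.
move=> /I_capped cu /I_capped cv /(encoding_adj phiE) [uv | uv | vu].
- by case: (one_apart_area uv); [apply: Or41 | apply: Or42].
- have [/area_eqon -> /area_eqon ->] := wraps_capped (stair u) cu uv.
  by apply: Or43; rewrite area_top area0.
- have [/area_eqon -> /area_eqon ->] := wraps_capped (stair v) cv vu.
  by apply: Or44; rewrite area_top area0.
Qed.

Lemma walk_l1dist k x y : I x -> I y -> l1dist m (phi x) (phi y) = k -> walk_in I x y k.
Proof.
elim: k x y => [|k IH] x y Ix Iy dxy.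
  by rewrite (encoding_inj phiE (l1dist_eq0 dxy)); apply: walk_nil.
have lower u v : I u -> I v -> l1dist m (phi u) (phi v) = k.+1 ->
    (exists2 t, t <= m & phi v t < phi u t) -> walk_in I u v k.+1.
  move=> Iu Iv duv /(lower_at_step (stair u) (stair v) (proj1 (I_capped u) Iu)).
  case=> t0 [s c near d]; have [u' Iu' u'_eq] := vertex_of s c.
  apply: walk_cons Iu _ (IH u' v Iu' Iv _).
    apply/(encoding_adj phiE)/Or31; apply: one_apart_eqon near => // t tm.
    by rewrite u'_eq.
  by rewrite (l1dist_eqon u'_eq (fun t _ => erefl)); lia.
case: (pickP [pred t : 'I_m.+1 | phi y t < phi x t]) => [t lt | ge].
  by apply: lower => //; exists t; rewrite // -ltnS.
case: (pickP [pred t : 'I_m.+1 | phi x t < phi y t]) => [t lt | le].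
  apply/walk_rev/lower => //; first by rewrite l1distC.
  by exists t; rewrite // -ltnS.
move: dxy; rewrite /l1dist big1 // => t _.
by have := ge t; have := le t; rewrite /=; lia.
Qed.

Lemma walk_le_half_apart x y : I x -> I y -> (forall t, t <= m -> phi y t < phi x t) ->
  exists2 k, k <= N %/ 2 & walk_in I x y k.
Proof.
move=> Ix Iy yx; have := l1dist_le_area (fun t tm => ltnW (yx t tm)).
have [le_half|gt_half] := leqP (2 * l1dist m (phi x) (phi y)) N.
  by exists (l1dist m (phi x) (phi y)); [lia | apply: walk_l1dist].
have [z Iz z0] := vertex_of (staircase0 m n_gt0) (@capped0 n m).
have [w Iw wtop] := vertex_of (staircase_top m n_gt0) (@capped_top n m).
have xw := walk_l1dist Ix Iw erefl; have zy := walk_l1dist Iz Iy erefl.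
have := walk_cat (walk_cat xw (walk_cons Iw (bottom_top_adj z0 wtop) (walk_nil Iz))) zy.
set k := _ + _ => xy; exists k => //.
have x_top : l1dist m (phi x) (top_stair n) + area m (phi x) = N.-1.
  by rewrite l1distC -area_top; apply/l1dist_le_area/le_top_stair/I_capped.
rewrite /k (l1dist_eqon (fun _ _ => erefl) wtop) (l1dist_eqon z0 (fun _ _ => erefl)) l1dist0l.
by lia.
Qed.

Lemma walk_le_half x y : I x -> I y -> exists2 k, k <= N %/ 2 & walk_in I x y k.
Proof.
move=> Ix Iy; case: (pickP [pred t : 'I_m.+1 | phi x t == phi y t]) => [t /eqP xy | apart].
  exists (l1dist m (phi x) (phi y)); last exact: walk_l1dist.
  have := l1dist_meet (stair x) (stair y) (ltn_ord t : t <= m) xy.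
  by have := leq_mul2r m.+1 m n; rewrite m_le_n orbT; lia.
have {}apart t : t <= m -> phi x t != phi y t.
  by move=> tm; have := apart (Ordinal (tm : t < m.+1)); rewrite /= => ->.
have [yx|xy|] := ltngtP (phi y 0) (phi x 0); last by move/esym/eqP; rewrite (negbTE (apart 0 _)).
  exact: walk_le_half_apart (staircase_apart_lt (stair x) (stair y) apart yx).
have yx t : t <= m -> phi y t != phi x t by rewrite eq_sym; apply: apart.
have [k k_le yx_walk] := walk_le_half_apart Iy Ix (staircase_apart_lt (stair y) (stair x) yx xy).
by exists k => //; apply: walk_rev yx_walk.
Qed.

Lemma area_walk_from_bottom z y k : eqon m (phi z) (fun=> 0) -> walk_in I z y k ->
  area m (phi y) <= k \/ N <= area m (phi y) + k.
Proof.
move=> z0; elim: k y => [|k IH] y.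
  by case=> p [/size0nil -> _ /= <- _]; left; rewrite (area_eqon z0) area0.
case/walk_last_step=> x [zx Ix xy Iy]; have N_gt0 : 0 < N by rewrite muln_gt0 n_gt0.
by have := IH x zx; case: (area_adj Ix Iy xy); lia.
Qed.

Theorem diameter_capped : induced_diam_eq I (N %/ 2).
Proof.
split=> [x y Ix Iy|]; first exact: walk_le_half.
have [z Iz z0] := vertex_of (staircase0 m n_gt0) (@capped0 n m).
have N_gt0 : 0 < N by rewrite muln_gt0 n_gt0.
have [g [sg cg ag]] := @staircase_of_area n m (N %/ 2) (ltn_Pdiv (isT : 1 < 2) N_gt0).
have [y Iy yg] := vertex_of sg cg.
exists z, y; split=> // k /(area_walk_from_bottom z0).
by rewrite (area_eqon yg) ag; lia.
Qed.

End Diameter.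

Section PartialSums.
Variables n m : nat.
Local Notation V := (yvert n m).

Definition partial_sum (v : V) t := v.1 + count id (take t v.2).

Lemma partial_sum0 v : partial_sum v 0 = v.1.
Proof. by rewrite /partial_sum take0 addn0. Qed.

Lemma partial_sumS v t : t < m -> partial_sum v t.+1 = partial_sum v t + nth false v.2 t.
Proof.
move=> tm; rewrite /partial_sum (take_nth false) ?size_tuple // -cats1 count_cat /= addn0.
by rewrite addnA; case: (nth false v.2 t).
Qed.

Lemma staircase_partial_sum v : staircase n m (partial_sum v).
Proof.
split=> [|t tm]; first by rewrite partial_sum0.
by rewrite partial_sumS //; case: (nth false v.2 t) => /=; [right | left]; lia.
Qed.

Lemma partial_sum_onto g : staircase n m g -> exists v, eqon m (partial_sum v) g.
Proof.
case=> g0 gS; pose s := [seq g t.+1 != g t | t <- iota 0 m].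
have size_s : size s == m by rewrite size_map size_iota.
exists (Ordinal g0, Tuple size_s); elim=> [|t IH] tm; first by rewrite partial_sum0.
rewrite partial_sumS // IH ?(ltnW tm) //= (nth_map 0) ?size_iota // nth_iota //=.
by case: (gS t tm) => ->; rewrite ?eqxx ?addn0 // (_ : (g t).+1 != g t) ?addn1 //; lia.
Qed.

Lemma partial_sum_inj u v : eqon m (partial_sum u) (partial_sum v) -> u = v.
Proof.
move=> uv; case: u v uv => [u1 u2] [v1 v2] uv.
have e1 : u1 = v1 by apply: val_inj; have := uv 0 (leq0n _); rewrite !partial_sum0.
have e2 : u2 = v2.
  apply/val_inj/(@eq_from_nth _ false); first by rewrite !size_tuple.
  move=> i; rewrite size_tuple => im; have := uv i.+1 im.
  rewrite !partial_sumS // uv ?(ltnW im) //.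
  by case: (nth false u2 i); case: (nth false v2 i); lia.
by rewrite e1 e2.
Qed.

Lemma yent_partial_sum (v : V) j : 0 < j <= m ->
  yent v j = ((partial_sum v j)%:Z - (partial_sum v j.-1)%:Z)%R.
Proof.
case: j => [|j] //= jm; rewrite /yent /= jm partial_sumS //.
by case: (nth false v.2 j) => /=; lia.
Qed.

Lemma yent_last (v : V) : yent v m.+1 = ylast v.
Proof. by rewrite /yent /= ltnn. Qed.

Lemma ylastE (v : V) : ylast v = (n - partial_sum v m %% n) %% n.
Proof. by rewrite /ylast /partial_sum take_oversize // size_tuple. Qed.

Lemma ylast_partial_sum (v : V) : exists k, ylast v + partial_sum v m = k * n.
Proof.
have n_gt0 : 0 < n := leq_ltn_trans (leq0n _) (ltn_ord v.1).
rewrite ylastE; have := divn_eq (partial_sum v m) n; have := ltn_pmod (partial_sum v m) n_gt0.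
set q := _ %/ n; set r := _ %% n => r_lt sum_eq.
have [r0|r_gt0] := posnP r; first by exists q; rewrite r0 subn0 modnn; lia.
by exists q.+1; rewrite modn_small; lia.
Qed.

End PartialSums.

Section Adjacency.
Variables n m : nat.
Hypothesis m_gt0 : 0 < m.
Local Notation V := (yvert n m).
Local Notation F := (@partial_sum n m).

Lemma yeqat_eq j (x y d : int) : x = (y + d)%R -> yeqat n m j x y d.
Proof. by move=> ->; rewrite /yeqat subrr dvdz0 eqxx; case: ifP. Qed.

Definition move_at (u v : V) i (e : int) :=
  [/\ i <= m, forall j, j <= m.+1 -> j != i -> j != i.+1 -> yent u j = yent v j,
      yeqat n m i (yent u i) (yent v i) e & yeqat n m i.+1 (yent u i.+1) (yent v i.+1) (- e)%R].

Lemma yadjP (u v : V) :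
  yadj u v <-> exists i, exists2 e : int, e = 1%R \/ e = (-1)%R & move_at u v i e.
Proof.
split=> [/existsP [i /andP [/forallP same shift]] | [i [e e1 [im same at_i at_i1]]]].
  have same' j : j <= m.+1 -> j != i -> j != i.+1 -> yent u j = yent v j.
    by move=> jm ji ji1; have := same (Ordinal (jm : j < m.+2)); rewrite /= ji ji1 => /eqP.
  have im : i <= m by rewrite -ltnS.
  exists i; case/orP: shift => /andP [at_i at_i1]; first by exists 1%R; [left | split].
  by exists (-1)%R; [right | rewrite /move_at opprK; split].
apply/existsP; exists (Ordinal (im : i < m.+1)); apply/andP; split.
  by apply/forallP => j; apply/implyP => /andP [ji ji1]; rewrite same // -ltnS.
by case: e1 at_i at_i1 => -> at_i at_i1; rewrite at_i at_i1 ?orbT.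
Qed.

Definition sum_gap (u v : V) t : int := ((F u t)%:Z - (F v t)%:Z)%R.

Lemma sum_gap0 u v : sum_gap u v 0 = ((u.1 : nat)%:Z - (v.1 : nat)%:Z)%R.
Proof. by rewrite /sum_gap !partial_sum0. Qed.

Lemma yent_sub u v j : 0 < j <= m ->
  (yent u j - yent v j)%R = (sum_gap u v j - sum_gap u v j.-1)%R.
Proof. by move=> jm; rewrite !yent_partial_sum /sum_gap //; lia. Qed.

Lemma move_at_gap_const u v i e a b : move_at u v i e -> a <= b <= m ->
  (b < i) || (i < a) -> sum_gap u v b = sum_gap u v a.
Proof.
case=> _ same _ _; elim: b => [|b IH] /andP [ab bm] off; first by case: a ab {off}.
have [<-|ab'] := eqVneq a b.+1; first by [].
have gapS : sum_gap u v b.+1 = sum_gap u v b.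
  have := @yent_sub u v b.+1; rewrite same ?subrr //=; [move=> /(_ bm); lia | lia..].
by rewrite gapS IH; lia.
Qed.

Lemma move_at_inner u v i e : 0 < i -> e = 1%R \/ e = (-1)%R -> move_at u v i e ->
  one_apart m (F u) (F v).
Proof.
move=> i_gt0 e1 uv; case: (uv) => im same at_i at_i1.
move: at_i; rewrite /yeqat (gtn_eqF i_gt0) (ltn_eqF (im : i < m.+1)) /= => /eqP at_i.
have gap_lt t : t < i -> sum_gap u v t = 0%R.
  move=> ti; rewrite (move_at_gap_const (a := 0) uv) ?sum_gap0; try lia.
  by have := same 0 (leq0n _); rewrite /yent /=; lia.
have gap_i : sum_gap u v i = e.
  have := @yent_sub u v i; rewrite i_gt0 im at_i => /(_ isT).
  by have := gap_lt i.-1; lia.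
have gap_gt t : i < t <= m -> sum_gap u v t = 0%R.
  move=> tm; move: at_i1; rewrite /yeqat /= (ltn_eqF (_ : i.+1 < m.+1)) /=; last by lia.
  move=> /eqP at_i1; rewrite (move_at_gap_const (a := i.+1) uv); try lia.
  by have := @yent_sub u v i.+1; rewrite at_i1 /=; lia.
exists i => //; move: gap_i; rewrite /sum_gap => gap_i; split; first by lia.
move=> s sm si; case: (ltngtP s i) => [lt_si|lt_is|eq_si].
- by have := gap_lt s lt_si; rewrite /sum_gap; lia.
- have /gap_gt : i < s <= m by rewrite lt_is sm.
  by rewrite /sum_gap; lia.
- by move: si; rewrite eq_si eqxx.
Qed.

(* A move across the bucket [v_0] changes [v_0] by [e] modulo [n], hence by [e], [e + n] or
   [e - n]; the last two cases shift every partial sum by [top_stair]. *)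
Lemma move_at_outer u v e : e = 1%R \/ e = (-1)%R -> move_at u v 0 e ->
  [\/ one_apart m (F u) (F v), wraps n m (F u) (F v) | wraps n m (F v) (F u)].
Proof.
move=> e1 uv; case: (uv) => _ _ at_0 at_1.
move: at_0 at_1; rewrite /yeqat /= eqSS (ltn_eqF m_gt0) => /dvdzP [k at_0] /eqP at_1.
have gap_t t : 0 < t <= m -> sum_gap u v t = (sum_gap u v 0 - e)%R.
  move=> tm; rewrite (move_at_gap_const (a := 1) uv); try lia.
  by have := @yent_sub u v 1; rewrite at_1 /=; lia.
have := ltn_ord u.1; have := ltn_ord v.1; move: at_0 gap_t.
rewrite sum_gap0 /sum_gap /yent /= => at_0 gap_t u1 v1.
have [k0|[k1|k1]] : k = 0%R \/ k = 1%R \/ k = (-1)%R by nia.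
- apply: Or31; exists 0 => //; rewrite !partial_sum0; split; first by lia.
  by move=> s sm s0; have := gap_t s; lia.
- apply: Or32 => -[|t] tm; rewrite /top_stair /=; first by rewrite !partial_sum0; lia.
  by have := gap_t t.+1 tm; lia.
- apply: Or33 => -[|t] tm; rewrite /top_stair /=; first by rewrite !partial_sum0; lia.
  by have := gap_t t.+1 tm; lia.
Qed.

Lemma yadj_partial_sum u v : yadj u v ->
  [\/ one_apart m (F u) (F v), wraps n m (F u) (F v) | wraps n m (F v) (F u)].
Proof.
case/yadjP=> i [e e1 uv]; have [i0|i_gt0] := posnP i.
  by move: uv; rewrite i0; apply: move_at_outer.
by apply: Or31; apply: move_at_inner uv.
Qed.

Lemma one_apart_yadj u v : one_apart m (F u) (F v) -> yadj u v.
Proof.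
case=> t tm [ft same].
have gap s : s <= m -> s != t -> sum_gap u v s = 0%R.
  by move=> sm st; rewrite /sum_gap same // subrr.
have [e e1 gap_t] : exists2 e : int, e = 1%R \/ e = (-1)%R & sum_gap u v t = e.
  by rewrite /sum_gap; case: ft => ft; [exists 1%R | exists (-1)%R]; auto; lia.
have ylast_uv : t < m -> ylast u = ylast v by move=> tlt; rewrite !ylastE same //; lia.
apply/yadjP; exists t, e => //; split=> //.
- move=> j jm jt jt1; have [j0|j_gt0] := posnP j.
    by move: jt; rewrite j0 => /(gap 0 (leq0n _)); rewrite sum_gap0 /yent /=; lia.
  have [mj|jm'] := ltnP m j.
    by rewrite (_ : j = m.+1) ?yent_last ?ylast_uv; lia.
  apply/eqP; rewrite -subr_eq0 yent_sub ?j_gt0 // !gap //; lia.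
- apply: yeqat_eq; have [t0|t_gt0] := posnP t.
    by move: gap_t; rewrite t0 sum_gap0 /yent /=; lia.
  by have := @yent_sub u v t; rewrite t_gt0 tm => /(_ isT); rewrite gap_t gap; lia.
have [tlt|tm'] := ltnP t m.
  apply: yeqat_eq; have := @yent_sub u v t.+1; rewrite tlt /= => /(_ isT).
  by rewrite gap_t gap; lia.
have tm_eq : t = m by lia.
have [ku u_k] := ylast_partial_sum u; have [kv v_k] := ylast_partial_sum v.
rewrite /yeqat tm_eq eqxx orbT !yent_last; apply/dvdzP; exists (ku%:Z - kv%:Z)%R.
by move: gap_t; rewrite mulrBl /sum_gap tm_eq; lia.
Qed.

Lemma wraps_yadj u v : wraps n m (F u) (F v) -> yadj u v.
Proof.
move=> uv; have := uv 0 (leq0n _); rewrite /top_stair /= !partial_sum0 => uv0.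
have uvS t : 0 < t <= m -> F u t = F v t + n.
  by case/andP=> t_gt0 tm; rewrite uv // /top_stair gtn_eqF.
apply/yadjP; exists 0, (-1)%R; [by right | split=> //].
- move=> j jm j0 j1; have [mj|jm'] := ltnP m j.
    by rewrite (_ : j = m.+1) ?yent_last ?ylastE ?uvS ?modnDr //; lia.
  by rewrite !yent_partial_sum ?uvS; lia.
- rewrite /yeqat /= /yent /= uv0 (_ : (_ - _ = n%:Z)%R) ?dvdzz //.
  by have := ltn_ord v.1; lia.
- apply: yeqat_eq; rewrite (@yent_partial_sum n m u 1 m_gt0) (@yent_partial_sum n m v 1 m_gt0).
  rewrite /= (uvS 1 m_gt0) !partial_sum0 uv0.
  by have := ltn_ord v.1; lia.
Qed.

Lemma encoding_partial_sum : encoding (@partial_sum n m).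
Proof.
split; [exact: staircase_partial_sum | exact: partial_sum_onto | exact: partial_sum_inj |].
move=> u v; split; first exact: yadj_partial_sum.
by case=> [/one_apart_yadj | /wraps_yadj | /wraps_yadj /yadjC].
Qed.

End Adjacency.

Section Intervals.
Variables n m : nat.
Local Notation V := (yvert n m).

Lemma psumS s i : psum s i.+1 = (psum s i + nth 0 s i.+1)%R.
Proof. by rewrite /psum big_ord_recr. Qed.

Lemma psum0 s : psum s 0 = nth 0%R s 0.
Proof. by rewrite /psum big_ord1. Qed.

Lemma psum_ycoords (v : V) i : i <= m -> psum (ycoords v) i = Posz (partial_sum v i).
Proof.
have nth_yc j : j <= m -> nth 0%R (ycoords v) j = yent v j.
  by move=> jm; rewrite /ycoords (nth_map 0) ?size_iota // nth_iota.
elim: i => [|i IH] im; first by rewrite psum0 nth_yc // partial_sum0.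
rewrite psumS IH ?(ltnW im) // nth_yc // yent_partial_sum //=; lia.
Qed.

Lemma psum_yhat0 i : psum (yhat0 m) i = 0%R.
Proof. by rewrite /psum big1 // => j _; rewrite nth_nseq if_same. Qed.

Lemma psum_yu0 i : 0 < n -> psum (yu0 n m) i = Posz (top_stair n i).
Proof.
move=> n_gt0; elim: i => [|i IH]; first by rewrite psum0.
rewrite psumS IH /top_stair; case: i {IH} => [|i] /=; first by lia.
by rewrite nth_nseq if_same addr0.
Qed.

Lemma psum_yhat1 i : i <= m -> psum (yhat1 n m) i = Posz (n.-1 + i).
Proof.
elim: i => [|i IH] im; first by rewrite psum0 addn0.
by rewrite psumS IH ?(ltnW im) //= nth_nseq im; lia.
Qed.

Lemma psum_yu1 i : i <= m -> psum (yu1 m) i = Posz i.-1.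
Proof.
elim: i => [|i IH] im; first by rewrite psum0.
rewrite psumS IH ?(ltnW im) //; case: i {IH} im => [|i] im //=.
by rewrite nth_nseq (_ : i < m.-1); lia.
Qed.

Lemma domP s t : reflect (forall i, i <= m -> (psum s i <= psum t i)%R) (dom m s t).
Proof.
by apply: (iffP allP) => st i; rewrite ?mem_iota => im; apply: st; rewrite ?mem_iota; lia.
Qed.

Lemma yI0_capped (v : V) : yI0 v <-> capped n m (partial_sum v).
Proof.
have [v0 _] := staircase_partial_sum v.
have n_gt0 : 0 < n := leq_ltn_trans (leq0n _) v0.
split=> [/andP [_ /domP le_u0] i im | capped_v].
  by have := le_u0 i im; rewrite psum_ycoords // psum_yu0 // /top_stair; case: (i == 0); lia.
apply/andP; split; apply/domP => i im; rewrite psum_ycoords // ?psum_yhat0 ?psum_yu0 //.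
by have := le_top_stair (staircase_partial_sum v) capped_v im; lia.
Qed.

Lemma yI1_capped (v : V) : yI1 v <-> capped n m (flip_stair n (partial_sum v)).
Proof.
have v_le := staircase_le (staircase_partial_sum v).
have n_gt0 : 0 < n := leq_ltn_trans (leq0n _) (ltn_ord v.1).
split=> [/andP [/domP ge_u1 _] i im | capped_v].
  by have := ge_u1 i im; rewrite psum_ycoords // psum_yu1 // /flip_stair; lia.
apply/andP; split; apply/domP => i im; rewrite psum_ycoords // ?psum_yu1 ?psum_yhat1 //.
  by have := capped_v i im; rewrite /flip_stair; lia.
by have := v_le i im; lia.
Qed.

End Intervals.

Theorem lemma5p14 (n m : nat) : (2 <= m)%N -> (m <= n)%N ->
  induced_diam_eq (@yI0 n m) ((n * m.+1) %/ 2) /\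
  induced_diam_eq (@yI1 n m) ((n * m.+1) %/ 2).
Proof.
move=> /ltnW m_gt0 m_le_n; have n_gt0 := leq_trans m_gt0 m_le_n.
have partial_sumE := encoding_partial_sum n m_gt0.
split; apply: (diameter_capped n_gt0 m_le_n).
- exact: partial_sumE.
- exact: yI0_capped.
- exact: encoding_flip partial_sumE.
- exact: yI1_capped.
Qed.
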